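(* For every integer $k\geq 2$, the direct power $\mathbb{N}^k$ contains uncountably many pairwise non-isomorphic subdirect products.
   Context: $\mathbb{N}=\{1,2,3,\dots\}$ is the free monogenic semigroup (positive integers under addition), and $\mathbb{N}^k$ is its $k$-fold direct power with componentwise addition. A subdirect product of $\mathbb{N}^k$ is a subsemigroup $U\leq\mathbb{N}^k$ such that for each $i=1,\dots,k$ the projection of $U$ onto the $i$-th coordinate is all of $\mathbb{N}$. *)

From mathcomp Require Import all_boot.
Set Implicit Arguments. Unset Strict Implicit. Unset Printing Implicit Defensive.

(* Elements of the ambient carrier: k-tuples of naturals, as finite functions.
   An element of N^k (N = {1,2,3,...}) is such a tuple with all entries >= 1. *)
Definition vec (k : nat) := {ffun 'I_k -> nat}.

Definition inNk (k : nat) (x : vec k) : Prop := forall i : 'I_k, 0 < x i.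

Definition vadd (k : nat) (x y : vec k) : vec k := [ffun i => x i + y i].

Definition subsemigroup (k : nat) (U : vec k -> Prop) : Prop :=
  (forall x, U x -> inNk x) /\
  (forall x y, U x -> U y -> U (vadd x y)).

Definition subdirect (k : nat) (U : vec k -> Prop) : Prop :=
  subsemigroup U /\
  (forall (i : 'I_k) (n : nat), 0 < n -> exists x, U x /\ x i = n).

Definition semigroup_iso (k : nat) (U V : vec k -> Prop) : Prop :=
  exists (f g : vec k -> vec k),
    (forall x, U x -> V (f x)) /\
    (forall y, V y -> U (g y)) /\
    (forall x, U x -> g (f x) = x) /\
    (forall y, V y -> f (g y) = y) /\
    (forall x y, U x -> U y -> f (vadd x y) = vadd (f x) (f y)).

Definition same_set (k : nat) (U V : vec k -> Prop) : Prop :=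
  forall x, U x <-> V x.

Definition countable_family (k : nat) (S : (vec k -> Prop) -> Prop) : Prop :=
  exists e : nat -> (vec k -> Prop), forall U, S U -> exists n, same_set U (e n).

From mathcomp Require Import all_boot zify.
Set Implicit Arguments.
Unset Strict Implicit.
Unset Printing Implicit Defensive.

(* For A a set of naturals, let U_A be the set of vectors (a, b, ..., b) with
   (a, b) in the planar semigroup [plane A]: the cone a, b >= 2 together with
   (1, 1) and the points (1, n + 3), n in A.  Additivity on the cone forces
   every homomorphism U_A -> U_B to act by a 2x2 matrix over N, and an
   isomorphism by a permutation matrix.  Either way U_A is contained in U_B:
   the swap sends (1, n + 3) out of every U_B, so it only occurs for A empty,
   where U_A is symmetric.  Hence isomorphic U_A are equal, and since A can be
   read off U_A, a diagonal argument shows there are uncountably many. *)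

Definition cone (a b : nat) : Prop := 2 <= a /\ 2 <= b.

Definition additive_on (P : nat -> nat -> Prop) (h : nat -> nat -> nat) : Prop :=
  forall a b c d, P a b -> P c d -> h (a + c) (b + d) = h a b + h c d.

Lemma additive_cone_linear h :
  additive_on cone h -> exists p q, forall a b, cone a b -> h a b = a * p + b * q.
Proof.
move=> h_add.
have succ_l a b : cone a b -> h a.+1 b + h 2 2 = h a b + h 3 2.
  move=> ab; rewrite -!h_add //; [congr h; lia | by rewrite /cone in ab *; lia].
have succ_r a b : cone a b -> h a b.+1 + h 2 2 = h a b + h 2 3.
  move=> ab; rewrite -!h_add //; [congr h; lia | by rewrite /cone in ab *; lia].
have shift_l n b : 2 <= b -> h (2 + n) b + n * h 2 2 = h 2 b + n * h 3 2.
  move=> b2; elim: n => [|n IH]; first by rewrite !addn0.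
  have := succ_l (2 + n) b (conj (leq_addr _ _) b2); rewrite addnS; nia.
have shift_r a m : 2 <= a -> h a (2 + m) + m * h 2 2 = h a 2 + m * h 2 3.
  move=> a2; elim: m => [|m IH]; first by rewrite !addn0.
  have := succ_r a (2 + m) (conj a2 (leq_addr _ _)); rewrite addnS; nia.
(* h 3 2 < h 2 2 would make h (2 + n) 2 decrease linearly, below 0. *)
have [p h32] : exists p, h 3 2 = h 2 2 + p.
  exists (h 3 2 - h 2 2); have := shift_l (h 2 2).+1 2 (leqnn 2); nia.
have [q h23] : exists q, h 2 3 = h 2 2 + q.
  exists (h 2 3 - h 2 2); have := shift_r 2 (h 2 2).+1 (leqnn 2); nia.
have h_cone n m : h (2 + n) (2 + m) = h 2 2 + n * p + m * q.
  have := shift_r (2 + n) m (leq_addr _ _); have := shift_l n 2 (leqnn 2); nia.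
have h22 : h 2 2 = 2 * p + 2 * q.
  have := h_add 2 2 2 2 (conj (leqnn 2) (leqnn 2)) (conj (leqnn 2) (leqnn 2)).
  rewrite (h_cone 2 2); lia.
exists p, q => a b [a2 b2].
rewrite -(subnKC a2) -(subnKC b2) h_cone; nia.
Qed.

Lemma additive_linear (P : nat -> nat -> Prop) h :
    (forall a b, cone a b -> P a b) -> additive_on P h ->
  exists p q, forall a b, P a b -> h a b = a * p + b * q.
Proof.
move=> coneP h_add.
have [p [q hpq]] : exists p q, forall a b, cone a b -> h a b = a * p + b * q.
  by apply: additive_cone_linear => a b c d ab cd; apply: h_add; apply: coneP.
have cone22 : cone 2 2 by [].
exists p, q => a b ab.
have := h_add a b 2 2 ab (coneP _ _ cone22).
have := hpq 2 2 cone22; have := hpq (a + 2) (b + 2) (conj (leq_addl _ _) (leq_addl _ _)).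
lia.
Qed.

Lemma nat_matrix_inverse_perm p1 q1 p2 q2 r1 s1 r2 s2 :
    p1 * r1 + p2 * s1 = 1 -> q1 * r1 + q2 * s1 = 0 ->
    p1 * r2 + p2 * s2 = 0 -> q1 * r2 + q2 * s2 = 1 ->
  (p1 = 1 /\ q1 = 0 /\ p2 = 0 /\ q2 = 1) \/ (p1 = 0 /\ q1 = 1 /\ p2 = 1 /\ q2 = 0).
Proof.
have sum1 x y z w : x * y + z * w = 1 -> x = 1 /\ y = 1 \/ z = 1 /\ w = 1.
  move=> H; have [/eqP|/eqP] : x * y = 1 \/ z * w = 1 by lia.
  - by rewrite muln_eq1 => /andP[/eqP-> /eqP->]; left.
  - by rewrite muln_eq1 => /andP[/eqP-> /eqP->]; right.
move=> /sum1 E1 E2 E3 /sum1 E4.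
by case: E1 E4 => [[? ?]|[? ?]] [[? ?]|[? ?]]; subst; lia.
Qed.

Definition plane (A : nat -> Prop) (a b : nat) : Prop :=
  cone a b \/ a = 1 /\ (b = 1 \/ exists2 n, A n & b = n.+3).

Lemma cone_plane A a b : cone a b -> plane A a b.
Proof. by left. Qed.

Lemma plane_gt0 A a b : plane A a b -> 0 < a /\ 0 < b.
Proof. by case=> [[]|[-> [->|[n _ ->]]]]; lia. Qed.

Lemma plane_add A a b c d : plane A a b -> plane A c d -> plane A (a + c) (b + d).
Proof. by move=> /plane_gt0 ? /plane_gt0 ?; left; rewrite /cone; lia. Qed.

Lemma plane_diag A n : 0 < n -> plane A n n.
Proof. by case: n => [|[|n]] // _; [right; split; [|left] | left]. Qed.

Lemma plane_code A n : plane A 1 n.+3 <-> A n.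
Proof.
split=> [[[]|[_ [|[m Am /eqP]]]] //|An]; first by rewrite !eqSS => /eqP ->.
by right; split=> //; right; exists n.
Qed.

Lemma plane_swap A B a b : plane A a b -> plane B b a -> plane B a b.
Proof.
case=> [/cone_plane //|[-> [->|[n _ ->]]]] //.
by case=> [[]|[]].
Qed.

Lemma semigroup_iso_inv_additive k (U V : vec k -> Prop) (f g : vec k -> vec k) :
    (forall x y, U x -> U y -> U (vadd x y)) ->
    (forall y, V y -> U (g y)) -> (forall x, U x -> g (f x) = x) ->
    (forall y, V y -> f (g y) = y) ->
    (forall x y, U x -> U y -> f (vadd x y) = vadd (f x) (f y)) ->
  forall x y, V x -> V y -> g (vadd x y) = vadd (g x) (g y).
Proof.
move=> U_add g_in gf fg f_add x y Vx Vy.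
have [Ugx Ugy] := (g_in x Vx, g_in y Vy).
by rewrite -{1}(fg x Vx) -{1}(fg y Vy) -f_add // gf //; exact: U_add.
Qed.

Lemma semigroup_iso_sym k (U V : vec k -> Prop) :
  (forall x y, U x -> U y -> U (vadd x y)) -> semigroup_iso U V -> semigroup_iso V U.
Proof.
move=> U_add [f [g [f_in [g_in [gf [fg f_add]]]]]].
exists g, f; do 4!split=> //.
exact: semigroup_iso_inv_additive f_add.
Qed.

Lemma diagonal_not_countable k (F : (nat -> Prop) -> vec k -> Prop) (pt : nat -> vec k) :
  (forall A n, F A (pt n) <-> A n) -> ~ countable_family (fun U => exists A, U = F A).
Proof.
move=> F_pt [e e_onto].
have [n /(_ (pt n))] := e_onto (F (fun n => ~ e n (pt n))) (ex_intro _ _ erefl).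
by rewrite F_pt; tauto.
Qed.

Section DiagonalEmbedding.

Variables (k : nat) (k_gt1 : 1 < k).

Definition vec2 (a b : nat) : vec k := [ffun i => if val i == 0 then a else b].

Definition lift (P : nat -> nat -> Prop) (x : vec k) : Prop :=
  exists a b, P a b /\ x = vec2 a b.

Lemma vadd_vec2 a b c d : vadd (vec2 a b) (vec2 c d) = vec2 (a + c) (b + d).
Proof. by apply/ffunP=> i; rewrite !ffunE; case: ifP. Qed.

Let i0 : 'I_k := Ordinal (ltnW k_gt1).
Let i1 : 'I_k := Ordinal k_gt1.

Lemma vec2_i0 a b : vec2 a b i0 = a. Proof. by rewrite ffunE. Qed.
Lemma vec2_i1 a b : vec2 a b i1 = b. Proof. by rewrite ffunE. Qed.

Lemma vec2_inj a b c d : vec2 a b = vec2 c d -> a = c /\ b = d.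
Proof.
move=> e; split.
- by rewrite -(vec2_i0 a b) e vec2_i0.
- by rewrite -(vec2_i1 a b) e vec2_i1.
Qed.

Lemma lift_vec2 P a b : lift P (vec2 a b) <-> P a b.
Proof.
split=> [[c [d [Pcd /vec2_inj [-> ->]]]] // | Pab].
by exists a, b.
Qed.

Lemma lift_add P :
    (forall a b c d, P a b -> P c d -> P (a + c) (b + d)) ->
  forall x y, lift P x -> lift P y -> lift P (vadd x y).
Proof.
move=> P_add _ _ [a [b [Pab ->]]] [c [d [Pcd ->]]].
by rewrite vadd_vec2; apply/lift_vec2/P_add.
Qed.

Lemma lift_subdirect P :
    (forall a b, P a b -> 0 < a /\ 0 < b) ->
    (forall a b c d, P a b -> P c d -> P (a + c) (b + d)) ->
    (forall n, 0 < n -> P n n) ->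
  subdirect (lift P).
Proof.
move=> P_pos P_add P_diag; split; first split.
- move=> _ [a [b [/P_pos [a_gt0 b_gt0] ->]]] i.
  by rewrite ffunE; case: ifP.
- exact: lift_add.
- move=> i n n_gt0; exists (vec2 n n); split; first exact/lift_vec2/P_diag.
  by rewrite ffunE; case: ifP.
Qed.

Lemma lift_hom_linear P Q (f : vec k -> vec k) :
    (forall a b, cone a b -> P a b) ->
    (forall x, lift P x -> lift Q (f x)) ->
    (forall x y, lift P x -> lift P y -> f (vadd x y) = vadd (f x) (f y)) ->
  exists p1 q1 p2 q2, forall a b, P a b ->
    f (vec2 a b) = vec2 (a * p1 + b * q1) (a * p2 + b * q2).
Proof.
move=> coneP f_in f_add.
have coord i : additive_on P (fun a b => f (vec2 a b) i).
  move=> a b c d Pab Pcd /=.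
  by rewrite -vadd_vec2 f_add ?ffunE //; apply/lift_vec2.
have [p1 [q1 f1]] := additive_linear coneP (coord i0).
have [p2 [q2 f2]] := additive_linear coneP (coord i1).
exists p1, q1, p2, q2 => a b Pab.
move: (f1 a b Pab) (f2 a b Pab) => /=.
have [c [d [_ ->]]] := f_in _ (proj2 (lift_vec2 P a b) Pab).
by rewrite vec2_i0 vec2_i1 => <- <-.
Qed.

Lemma lift_iso_sub_or_swap P Q :
    (forall a b, cone a b -> P a b) -> (forall a b, cone a b -> Q a b) ->
    (forall a b c d, P a b -> P c d -> P (a + c) (b + d)) ->
    semigroup_iso (lift P) (lift Q) ->
  (forall a b, P a b -> Q a b) \/ (forall a b, P a b -> Q b a).
Proof.
move=> coneP coneQ P_add [f [g [f_in [g_in [gf [fg f_add]]]]]].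
have g_add := semigroup_iso_inv_additive (lift_add P_add) g_in gf fg f_add.
have [p1 [q1 [p2 [q2 hf]]]] := lift_hom_linear coneP f_in f_add.
have [r1 [s1 [r2 [s2 hg]]]] := lift_hom_linear coneQ g_in g_add.
have f_lin a b : P a b -> Q (a * p1 + b * q1) (a * p2 + b * q2).
  by move=> Pab; rewrite -lift_vec2 -hf //; apply/f_in/lift_vec2.
have gf_lin a b : cone a b ->
    (a * p1 + b * q1) * r1 + (a * p2 + b * q2) * s1 = a /\
    (a * p1 + b * q1) * r2 + (a * p2 + b * q2) * s2 = b.
  move=> /coneP Pab; apply: vec2_inj; rewrite -hg; last exact: f_lin.
  by rewrite -hf ?gf //; apply/lift_vec2.
have [e1 f1] := gf_lin 2 2 (conj (leqnn 2) (leqnn 2)).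
have [e2 f2] := gf_lin 3 2 (conj (ltnW (ltnSn 2)) (leqnn 2)).
have [e3 f3] := gf_lin 2 3 (conj (leqnn 2) (ltnW (ltnSn 2))).
move: f_lin; have [] := @nat_matrix_inverse_perm p1 q1 p2 q2 r1 s1 r2 s2; [nia.. | | ].
- by move=> [-> [-> [-> ->]]] f_id; left=> a b /f_id; rewrite !muln0 !muln1 addn0 add0n.
- by move=> [-> [-> [-> ->]]] f_sw; right=> a b /f_sw; rewrite !muln0 !muln1 addn0 add0n.
Qed.

Lemma lift_plane_iso_sub A B :
  semigroup_iso (lift (plane A)) (lift (plane B)) ->
  forall x, lift (plane A) x -> lift (plane B) x.
Proof.
move=> iso _ [a [b [ab ->]]]; apply/lift_vec2.
have [sub|swap] := lift_iso_sub_or_swap (@cone_plane A) (@cone_plane B)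
  (@plane_add A) iso.
- exact: sub.
- exact: plane_swap ab (swap a b ab).
Qed.

End DiagonalEmbedding.

Theorem theoremB (k : nat) (hk : 2 <= k) :
  exists S : (vec k -> Prop) -> Prop,
    (forall U, S U -> subdirect U) /\
    (forall U V, S U -> S V -> semigroup_iso U V -> same_set U V) /\
    ~ countable_family S.
Proof.
exists (fun U => exists A, U = @lift k (plane A)); split; [|split].
- move=> _ [A ->].
  apply: (lift_subdirect hk); [exact: plane_gt0 | exact: plane_add | exact: plane_diag].
- move=> _ _ [A ->] [B ->] iso x; split; apply: (lift_plane_iso_sub hk) => //.
  exact: semigroup_iso_sym (lift_add hk (@plane_add A)) iso.
- apply: (@diagonal_not_countable k _ (fun n => vec2 k 1 n.+3)) => A n.
  by rewrite (lift_vec2 hk) plane_code.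
Qed.
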